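(* Let $(TQ\times\mathbb R^m,\vec\lambda^L,E_L)$ be the $m$-contact Lagrangian system of a regular Lagrangian $L:TQ\times\mathbb R^m\to\mathbb R$, and let $$X=F_i\frac{\partial}{\partial q^i}+G_j\frac{\partial}{\partial \dot q^j}+H_k\frac{\partial}{\partial z^k},\qquad F_i,G_j,H_k\in C^\infty(TQ\times\mathbb R^m),$$ be a vector field on $TQ\times\mathbb R^m$. If $$-X(L)-[X_{E_L},X]^v(L)+\sum_{k=1}^m\frac{\partial L}{\partial z^k}H_k=0,$$ then the function $X^v(L)$ is a dissipated quantity of the system, i.e. $X_{E_L}(X^v(L))=-X^v(L)\sum_{k=1}^mR_k(E_L)$.
   Context: $Q$ is an $n$-dimensional manifold; $TQ\times\mathbb R^m$ has local coordinates $(q^i,\dot q^i,z^1,\dots,z^m)$. $L$ is regular if the matrix $W_{ij}=\partial^2L/\partial\dot q^i\partial\dot q^j$ is invertible; $(W^{ij})$ denotes its inverse. Define the $1$-forms $\lambda^L_k=dz^k-\frac{\partial L}{\partial\dot q^j}dq^j$, $k=1,\dots,m$ (so $d\lambda^L_k=d\lambda^L_1$ for all $k$), the vector fields $R_k=\frac{\partial}{\partial z^k}-W^{ij}\frac{\partial^2L}{\partial\dot q^i\partial z^k}\frac{\partial}{\partial\dot q^j}$ (which satisfy $\lambda^L_i(R_k)=\delta^i_k$, $i_{R_k}d\lambda^L_1=0$), and the energy $E_L=\dot q^i\frac{\partial L}{\partial\dot q^i}-L$. The forms $\lambda^L_k$ define a uniform $m$-contact structure on $TQ\times\mathbb R^m$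 with Reeb vector fields $R_k$. $X_{E_L}$ is the unique vector field with $\lambda^L_k(X_{E_L})=-E_L$ for all $k$ and $i_{X_{E_L}}d\lambda^L_1=dE_L-\sum_{k=1}^mR_k(E_L)\lambda^L_k$. The vertical endomorphism is $S=\frac{\partial}{\partial\dot q^i}\otimes dq^i$, and for a vector field $Z=F_i\partial_{q^i}+G_j\partial_{\dot q^j}+H_k\partial_{z^k}$ one writes $Z^v:=S(Z)=F_i\frac{\partial}{\partial\dot q^i}$. A function $g$ is a dissipated quantity if $X_{E_L}(g)=-g\sum_{k=1}^mR_k(E_L)$. *)

From HB Require Import structures.
From mathcomp Require Import all_boot all_order all_algebra.
From mathcomp Require Import all_classical all_reals all_analysis.
Set Implicit Arguments. Unset Strict Implicit. Unset Printing Implicit Defensive.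
Import Order.TTheory GRing.Theory Num.Theory.
Import numFieldNormedType.Exports.
Local Open Scope classical_set_scope.
Local Open Scope ring_scope.

Section MContact.
Context {R : realType} {n m : nat}.

(* Points of the coordinate domain of TQ x R^m: coordinates
   (q^1..q^n, qdot^1..qdot^n, z^1..z^m) stored in a row vector. *)
Local Notation N := (n + n + m)%N.
Local Notation P := 'rV[R]_N.

Definition iq (i : 'I_n) : 'I_N := lshift m (lshift n i).
Definition iv (i : 'I_n) : 'I_N := lshift m (rshift n i).
Definition iz (k : 'I_m) : 'I_N := rshift (n + n) k.

Definition qpart (x : P) : 'rV[R]_n := \row_i x 0 (iq i).
(* coordinate domain  U x R^n x R^m  of TQ x R^m, for a chart domain U of Q *)
Definition cdom (U : set 'rV[R]_n) : set P := [set x | U (qpart x)].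

Definition ebasis (a : 'I_N) : P := delta_mx 0 a.
Definition pd (a : 'I_N) (f : P -> R) : P -> R := fun x => 'D_(ebasis a) f x.

Definition iterD (vs : seq P) (f : P -> R) : P -> R :=
  foldr (fun v g => 'D_v g) f vs.
Definition smooth_on (D : set P) (f : P -> R) : Prop :=
  forall (vs : seq P) (x : P), D x -> differentiable (iterD vs f) x.

(* vector fields, given by their components w.r.t. the coordinate basis *)
Definition vfield := P -> P.
Definition vf_smooth_on (D : set P) (Y : vfield) : Prop :=
  forall a : 'I_N, smooth_on D (fun x => Y x 0 a).
Definition act (Y : vfield) (f : P -> R) : P -> R :=
  fun x => \sum_(a < N) Y x 0 a * pd a f x.
Definition lie (X Y : vfield) : vfield :=
  fun x => \row_a (act X (fun y => Y y 0 a) x - act Y (fun y => X y 0 a) x).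
(* vertical endomorphism  S = d/dqdot^i (x) dq^i :  Z^v = S(Z) *)
Definition vlift (Y : vfield) : vfield :=
  fun x => \row_a (\sum_(i < n | a == iv i) Y x 0 (iq i)).

(* 1-forms (coefficient rows w.r.t. dx^a) and 2-forms (antisymmetric
   coefficient matrices: omega = sum_(a<b) omega_ab dx^a /\ dx^b) *)
Definition form1 := P -> P.
Definition eval1 (al : form1) (Y : vfield) : P -> R :=
  fun x => \sum_(a < N) al x 0 a * Y x 0 a.
Definition dfun (f : P -> R) : form1 := fun x => \row_a pd a f x.
Definition d1 (al : form1) : P -> 'M[R]_N :=
  fun x => \matrix_(a, b) (pd a (fun y => al y 0 b) x - pd b (fun y => al y 0 a) x).
Definition contr2 (Y : vfield) (om : P -> 'M[R]_N) : form1 :=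
  fun x => \row_b (\sum_(a < N) Y x 0 a * om x a b).

Definition Wmx (L : P -> R) (x : P) : 'M[R]_n :=
  \matrix_(i, j) pd (iv i) (pd (iv j) L) x.
Definition regular_on (D : set P) (L : P -> R) : Prop :=
  forall x, D x -> Wmx L x \in unitmx.
(* lambda^L_k = dz^k - dL/dqdot^j dq^j *)
Definition lamL (L : P -> R) (k : 'I_m) : form1 :=
  fun x => \row_a ((a == iz k)%:R - \sum_(j < n | a == iq j) pd (iv j) L x).
Definition Reeb (L : P -> R) (k : 'I_m) : vfield :=
  fun x => \row_a ((a == iz k)%:R -
     \sum_(j < n | a == iv j) \sum_(i < n)
        invmx (Wmx L x) i j * pd (iv i) (pd (iz k) L) x).
Definition energy (L : P -> R) : P -> R :=
  fun x => \sum_(i < n) x 0 (iv i) * pd (iv i) L x - L x.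

(* Y satisfies the defining equations of X_{E_L} on D:
   lambda_k(Y) = -E_L for all k, and
   i_Y dlambda_1 = dE_L - sum_k R_k(E_L) lambda_k
   (stated for every dlambda_k, which all coincide with dlambda_1). *)
Definition is_XEL (D : set P) (L : P -> R) (Y : vfield) : Prop :=
  forall x, D x ->
    (forall k : 'I_m, eval1 (lamL L k) Y x = - energy L x) /\
    (forall k : 'I_m, contr2 Y (d1 (lamL L k)) x =
       dfun (energy L) x - \sum_(l < m) act (Reeb L l) (energy L) x *: lamL L l x).

Definition dissipated (D : set P) (L : P -> R) (XE : vfield) (g : P -> R) : Prop :=
  forall x, D x ->
    act XE g x = - g x * \sum_(k < m) act (Reeb L k) (energy L) x.

End MContact.

(* A regular Lagrangian forces X_{E_L} to be second order: the dqdot^i-components of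
   i_{X_{E_L}} d lambda^L_k = dE_L - sum_l R_l(E_L) lambda^L_l read W (dq/dt - qdot) = 0.
   The dq^i-components are then the Herglotz equations
   X_{E_L}(dL/dqdot^i) = dL/dq^i - r dL/dqdot^i, with r = sum_k R_k(E_L).
   For X^v(L) = F_i dL/dqdot^i the Leibniz rule gives
   X_{E_L}(X^v L) = X_{E_L}(F_i) dL/dqdot^i + F_i dL/dq^i - r X^v(L), while, X_{E_L}
   being second order on a neighbourhood, [X_{E_L}, X]^v(L) = (X_{E_L}(F_i) - G_i)
   dL/dqdot^i.  The hypothesis thus says X_{E_L}(F_i) dL/dqdot^i = - F_i dL/dq^i. *)

From HB Require Import structures.
From mathcomp Require Import all_boot all_order all_algebra.
From mathcomp Require Import all_classical all_reals all_analysis.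
From mathcomp Require Import lra.
Import Order.TTheory GRing.Theory Num.Theory.
Import numFieldNormedType.Exports.
Local Open Scope classical_set_scope.
Local Open Scope ring_scope.
Set Implicit Arguments. Unset Strict Implicit.

Section DerivativeRules.
Variables (R : realType) (V : normedModType R).

Lemma derivable_sum_mul k (f g : 'I_k -> V -> R) (x v : V) :
  (forall i, derivable (f i) x v) -> (forall i, derivable (g i) x v) ->
  derivable (fun y => \sum_(i < k) f i y * g i y) x v.
Proof.
move=> df dg.
have -> : (fun y => \sum_(i < k) f i y * g i y) = \sum_(i < k) (f i * g i).
  by apply/funext => y; rewrite fct_sumE.
by apply: derivable_sum => i; apply: derivableM.
Qed.

Lemma derive_sum_mul k (f g : 'I_k -> V -> R) (x v : V) :
  (forall i, derivable (f i) x v) -> (forall i, derivable (g i) x v) ->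
  'D_v (fun y => \sum_(i < k) f i y * g i y) x =
  \sum_(i < k) ('D_v (f i) x * g i x + f i x * 'D_v (g i) x).
Proof.
move=> df dg.
have -> : (fun y => \sum_(i < k) f i y * g i y) = \sum_(i < k) (f i * g i).
  by apply/funext => y; rewrite fct_sumE.
rewrite derive_sum => [|i]; last exact: derivableM.
by apply: eq_bigr => i _; rewrite deriveM // addrC [_ * g i x]mulrC.
Qed.

Lemma derivable_mx_coord p q (i : 'I_p) (j : 'I_q) (x v : 'M[R]_(p, q)) :
  derivable (fun y : 'M[R]_(p, q) => y i j) x v.
Proof. by move/derivable_mxP: (@derivable_id _ _ x v); apply. Qed.

Lemma derive_mx_coord p q (i : 'I_p) (j : 'I_q) (x v : 'M[R]_(p, q)) :
  'D_v (fun y : 'M[R]_(p, q) => y i j) x = v i j.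
Proof.
have := derive_mx (@derivable_id _ _ x v); rewrite derive_id => /matrixP/(_ i j).
by rewrite mxE => ->.
Qed.

End DerivativeRules.

Section MContactLagrangian.
Variables (R : realType) (n m : nat).
Local Notation N := (n + n + m)%N.
Local Notation P := 'rV[R]_N.
Implicit Types (x y : P) (f g : P -> R) (Y : P -> P) (L : P -> R) (D : set P).

Lemma iq_inj : injective (@iq n m).
Proof. by move=> i j /lshift_inj/lshift_inj. Qed.

Lemma iv_inj : injective (@iv n m).
Proof. by move=> i j /lshift_inj/rshift_inj. Qed.

Lemma eq_iqiv i j : (iq i == iv j :> 'I_N) = false.
Proof. by rewrite eq_lshift eq_lrshift. Qed.

Lemma eq_iviq i j : (iv i == iq j :> 'I_N) = false.
Proof. by rewrite eq_lshift eq_rlshift. Qed.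

Lemma eq_iqiz i k : (iq i == iz k :> 'I_N) = false.
Proof. exact: eq_lrshift. Qed.

Lemma eq_iziq k i : (iz k == iq i :> 'I_N) = false.
Proof. exact: eq_rlshift. Qed.

Lemma eq_iviz i k : (iv i == iz k :> 'I_N) = false.
Proof. exact: eq_lrshift. Qed.

Lemma eq_iziv k i : (iz k == iv i :> 'I_N) = false.
Proof. exact: eq_rlshift. Qed.

Lemma sum_coord (V : nmodType) (c : 'I_N -> V) :
  \sum_(a < N) c a =
  \sum_(i < n) c (iq i) + \sum_(i < n) c (iv i) + \sum_(k < m) c (iz k).
Proof. by rewrite big_split_ord /= big_split_ord. Qed.

Lemma sum_inj_eq (I : finType) (T : eqType) (h : I -> T) (F : I -> R) i :
  injective h -> \sum_(j | h i == h j) F j = F i.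
Proof.
by move=> h_inj; rewrite (big_pred1 i) // => j; rewrite /= (inj_eq h_inj) eq_sym.
Qed.

Lemma pd_coord a b x : pd a (fun y => y 0 b) x = (a == b)%:R.
Proof. by rewrite /pd derive_mx_coord mxE eqxx eq_sym. Qed.

Lemma smooth_on_derivable D f x v : smooth_on D f -> D x -> derivable f x v.
Proof. by move=> sf Dx; apply/diff_derivable/(sf [::] x Dx). Qed.

Lemma smooth_on_derivable_pd D f a x v :
  smooth_on D f -> D x -> derivable (pd a f) x v.
Proof. by move=> sf Dx; apply/diff_derivable/(sf [:: ebasis a] x Dx). Qed.

Lemma open_cdom (U : set 'rV[R]_n) : open U -> open (cdom U : set P).
Proof.
move=> oU; rewrite openE => x Ux.
have /nbhs_ballP[e e0 sU] : nbhs (qpart x) U by apply: open_nbhs_nbhs.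
apply/nbhs_ballP; exists e => // y [_ xy]; apply: sU; split => // i j.
by rewrite !mxE; apply: xy.
Qed.

Lemma act_coord Y b x : act Y (fun y => y 0 b) x = Y x 0 b.
Proof.
rewrite /act (bigD1 b) //= pd_coord eqxx mulr1 big1 ?addr0 // => a /negbTE ab.
by rewrite pd_coord ab mulr0.
Qed.

Lemma act_near_eq Y f g x : (\near x, f x = g x) -> act Y f x = act Y g x.
Proof. by move=> fg; apply: eq_bigr => a _; rewrite /pd (near_eq_derive _ fg). Qed.

Lemma act_sum_mul k Y (f g : 'I_k -> P -> R) x :
  (forall i v, derivable (f i) x v) -> (forall i v, derivable (g i) x v) ->
  act Y (fun y => \sum_(i < k) f i y * g i y) x =
  \sum_(i < k) (act Y (f i) x * g i x + f i x * act Y (g i) x).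
Proof.
move=> df dg; rewrite /act.
under eq_bigr do rewrite /pd derive_sum_mul // big_distrr.
rewrite exchange_big; apply: eq_bigr => i _ /=.
rewrite big_distrl big_distrr -big_split /=; apply: eq_bigr => a _.
by rewrite mulrDr !mulrA [Y x 0 a * f i x]mulrC.
Qed.

Lemma act_vlift Y f x :
  act (vlift Y) f x = \sum_(i < n) Y x 0 (iq i) * pd (iv i) f x.
Proof.
rewrite /act sum_coord big1 => [|i _]; last first.
  by rewrite mxE big_pred0 ?mul0r // => j; apply: eq_iqiv.
rewrite [X in _ + X]big1 => [|k _]; last first.
  by rewrite mxE big_pred0 ?mul0r // => j; apply: eq_iziv.
by rewrite add0r addr0; apply: eq_bigr => i _; rewrite mxE (sum_inj_eq _ _ iv_inj).
Qed.

Lemma act_vlift_lie Y Z f x :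
  (\forall y \near x, forall i, Y y 0 (iq i) = y 0 (iv i)) ->
  act (vlift (lie Y Z)) f x =
  \sum_(i < n) (act Y (fun y => Z y 0 (iq i)) x - Z x 0 (iv i)) * pd (iv i) f x.
Proof.
move=> sode; rewrite act_vlift; apply: eq_bigr => i _.
rewrite mxE -(act_coord Z (iv i)); congr ((_ - _) * _).
by apply: act_near_eq; apply: filterS sode => y /(_ i).
Qed.

Lemma lamL_q L k j y : lamL L k y 0 (iq j) = - pd (iv j) L y.
Proof. by rewrite mxE eq_iqiz (sum_inj_eq _ _ iq_inj) sub0r. Qed.

Lemma lamL_v L k j y : lamL L k y 0 (iv j) = 0.
Proof. by rewrite mxE eq_iviz big_pred0 ?subrr // => i; apply: eq_iviq. Qed.

Lemma lamL_z L k l y : lamL L k y 0 (iz l) = (l == k)%:R.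
Proof. by rewrite mxE eq_rshift big_pred0 ?subr0 // => i; apply: eq_iziq. Qed.

Lemma pd_lamL_q L k j a x : derivable (pd (iv j) L) x (ebasis a) ->
  pd a (fun y => lamL L k y 0 (iq j)) x = - pd a (pd (iv j) L) x.
Proof.
by move=> dL; rewrite /pd -deriveN //; congr derive; apply/funext => y; rewrite lamL_q.
Qed.

Lemma pd_lamL_v L k j a x : pd a (fun y => lamL L k y 0 (iv j)) x = 0.
Proof.
rewrite /pd -(derive_cst (0 : R) x (ebasis a)); congr derive.
by apply/funext => y; rewrite lamL_v.
Qed.

Lemma pd_lamL_z L k l a x : pd a (fun y => lamL L k y 0 (iz l)) x = 0.
Proof.
rewrite /pd -(derive_cst ((l == k)%:R : R) x (ebasis a)); congr derive.
by apply/funext => y; rewrite lamL_z.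
Qed.

Lemma contr2_d1E Y (al : P -> P) x b :
  contr2 Y (d1 al) x 0 b =
  act Y (fun y => al y 0 b) x - \sum_(a < N) Y x 0 a * pd b (fun y => al y 0 a) x.
Proof. by rewrite mxE -sumrB; apply: eq_bigr => a _; rewrite mxE mulrBr. Qed.

Lemma is_XEL_contr2E D L Y k b x : is_XEL D L Y -> D x ->
  contr2 Y (d1 (lamL L k)) x 0 b = pd b (energy L) x
    - \sum_(l < m) act (Reeb L l) (energy L) x * lamL L l x 0 b.
Proof.
move=> XY Dx; rewrite (XY x Dx).2 !mxE summxE; congr (_ - _).
by apply: eq_bigr => l _; rewrite mxE.
Qed.

Section SmoothLagrangian.
Variables (D : set P) (L : P -> R).
Hypothesis sL : smooth_on D L.

Lemma sum_pd_lamL Y k c x : D x ->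
  \sum_(a < N) Y x 0 a * pd c (fun y => lamL L k y 0 a) x =
  - \sum_(j < n) Y x 0 (iq j) * pd c (pd (iv j) L) x.
Proof.
move=> Dx; rewrite sum_coord [X in _ + X]big1 => [|l _]; last first.
  by rewrite pd_lamL_z mulr0.
rewrite [X in _ + X + _]big1 => [|j _]; last by rewrite pd_lamL_v mulr0.
rewrite !addr0 -sumrN; apply: eq_bigr => j _.
by rewrite pd_lamL_q ?mulrN //; apply: smooth_on_derivable_pd sL Dx.
Qed.

Lemma contr2_lamL_v Y k i x : D x ->
  contr2 Y (d1 (lamL L k)) x 0 (iv i) =
  \sum_(j < n) Y x 0 (iq j) * pd (iv i) (pd (iv j) L) x.
Proof.
move=> Dx; rewrite contr2_d1E sum_pd_lamL // opprK.
have -> : act Y (fun y => lamL L k y 0 (iv i)) x = 0.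
  by apply: big1 => a _; rewrite pd_lamL_v mulr0.
by rewrite add0r.
Qed.

Lemma contr2_lamL_q Y k i x : D x ->
  contr2 Y (d1 (lamL L k)) x 0 (iq i) =
  - act Y (pd (iv i) L) x + \sum_(j < n) Y x 0 (iq j) * pd (iq i) (pd (iv j) L) x.
Proof.
move=> Dx; rewrite contr2_d1E sum_pd_lamL // opprK -sumrN; congr (_ + _).
apply: eq_bigr => a _; rewrite pd_lamL_q ?mulrN //.
exact: smooth_on_derivable_pd sL Dx.
Qed.

Lemma pd_energy a x : D x ->
  pd a (energy L) x = \sum_(j < n) ((a == iv j)%:R * pd (iv j) L x
     + x 0 (iv j) * pd a (pd (iv j) L) x) - pd a L x.
Proof.
move=> Dx; have dLv j v : derivable (pd (iv j) L) x v := smooth_on_derivable_pd sL Dx.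
rewrite /pd deriveB; last 2 first.
- by apply: derivable_sum_mul => j; [apply: derivable_mx_coord | apply: dLv].
- exact: smooth_on_derivable sL Dx.
rewrite derive_sum_mul // => [|j]; last exact: derivable_mx_coord.
by congr (_ - _); apply: eq_bigr => j _; rewrite -(pd_coord _ _ x).
Qed.

Lemma pd_energy_v i x : D x ->
  pd (iv i) (energy L) x = \sum_(j < n) x 0 (iv j) * pd (iv i) (pd (iv j) L) x.
Proof.
move=> Dx; rewrite pd_energy // big_split /= (bigD1 i) //= eqxx mul1r.
rewrite big1 => [|j /negbTE ji]; last by rewrite (inj_eq iv_inj) eq_sym ji mul0r.
by rewrite addr0 addrAC subrr add0r.
Qed.

Lemma pd_energy_q i x : D x ->
  pd (iq i) (energy L) x =
  \sum_(j < n) x 0 (iv j) * pd (iq i) (pd (iv j) L) x - pd (iq i) L x.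
Proof.
by move=> Dx; rewrite pd_energy //; under eq_bigr do rewrite eq_iqiv mul0r add0r.
Qed.

Section EulerLagrangeField.
Variable Y : P -> P.
Hypotheses (m_gt0 : (0 < m)%N) (rL : regular_on D L) (XY : is_XEL D L Y).

Lemma is_XEL_sode i x : D x -> Y x 0 (iq i) = x 0 (iv i).
Proof.
move=> Dx; pose w : 'cV[R]_n := \col_j (Y x 0 (iq j) - x 0 (iv j)).
suff Ww : Wmx L x *m w = 0.
  have w0 : w = 0 by rewrite -(mulKmx (rL Dx) w) Ww mulmx0.
  by move/matrixP/(_ i 0): w0; rewrite !mxE => /eqP; rewrite subr_eq0 => /eqP.
apply/matrixP => i' j'; have := is_XEL_contr2E (Ordinal m_gt0) (iv i') XY Dx.
rewrite contr2_lamL_v // pd_energy_v // [X in _ - X]big1 => [|l _]; last first.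
  by rewrite lamL_v mulr0.
rewrite subr0 !mxE => Ev.
rewrite (eq_bigr (fun j => Y x 0 (iq j) * pd (iv i') (pd (iv j) L) x
                         - x 0 (iv j) * pd (iv i') (pd (iv j) L) x)) => [|j _].
  by rewrite sumrB Ev subrr.
by rewrite !mxE mulrBr ![pd _ _ _ * _]mulrC.
Qed.

Lemma is_XEL_herglotz i x : D x ->
  act Y (pd (iv i) L) x =
  pd (iq i) L x - (\sum_(l < m) act (Reeb L l) (energy L) x) * pd (iv i) L x.
Proof.
move=> Dx; have := is_XEL_contr2E (Ordinal m_gt0) (iq i) XY Dx.
rewrite contr2_lamL_q // pd_energy_q //.
under eq_bigr do rewrite is_XEL_sode //.
under [X in _ = _ - X]eq_bigr do rewrite lamL_q mulrN.
by rewrite sumrN -big_distrl /=; lra.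
Qed.

Lemma act_XEL_vlift Z x : vf_smooth_on D Z -> D x ->
  act Y (act (vlift Z) L) x =
  \sum_(i < n) act Y (fun y => Z y 0 (iq i)) x * pd (iv i) L x
  + \sum_(i < n) Z x 0 (iq i) * pd (iq i) L x
  - (\sum_(l < m) act (Reeb L l) (energy L) x) * act (vlift Z) L x.
Proof.
move=> sZ Dx.
have -> : act (vlift Z) L = fun y => \sum_(i < n) Z y 0 (iq i) * pd (iv i) L y.
  by apply/funext => y; rewrite act_vlift.
rewrite act_sum_mul => [|i v|i v]; last 2 first.
- exact: smooth_on_derivable (sZ _) Dx.
- exact: smooth_on_derivable_pd sL Dx.
under eq_bigr do rewrite is_XEL_herglotz // mulrBr mulrCA.
by rewrite big_split sumrB -big_distrr /= addrA.
Qed.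

End EulerLagrangeField.

End SmoothLagrangian.

End MContactLagrangian.

Theorem theorem3 (R : realType) (n m : nat) (U : set 'rV[R]_n)
    (L : 'rV[R]_(n + n + m) -> R) (XE X : 'rV[R]_(n + n + m) -> 'rV[R]_(n + n + m)) :
  (0 < m)%N ->
  open U ->
  smooth_on (cdom U) L ->
  regular_on (cdom U) L ->
  vf_smooth_on (cdom U) XE ->
  is_XEL (cdom U) L XE ->
  vf_smooth_on (cdom U) X ->
  (forall x, cdom U x ->
     - act X L x - act (vlift (lie XE X)) L x
     + \sum_(k < m) pd (iz k) L x * X x 0 (iz k) = 0) ->
  dissipated (cdom U) L XE (act (vlift X) L).
Proof.
move=> m_gt0 oU sL rL _ XEL sX hyp x Ux.
have sode : \forall y \near x, forall i, XE y 0 (iq i) = y 0 (iv i).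
  have : nbhs x (cdom U) by apply: open_nbhs_nbhs; split => //; exact: open_cdom.
  by apply: filterS => y Uy i; apply: (is_XEL_sode sL m_gt0 rL XEL).
have := hyp x Ux; rewrite (act_vlift_lie _ _ sode) {1}/act sum_coord.
rewrite (act_XEL_vlift sL m_gt0 rL XEL sX Ux).
under [X in _ + X = 0]eq_bigr do rewrite mulrC.
under [X in _ - X + _ = 0]eq_bigr do rewrite mulrBl.
by rewrite sumrB; lra.
Qed.
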